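(* Let $\mathcal C$ be a small cylinder category and $f:X\to X'$ a morphism in $\widetilde{\mathcal C}$. The following are equivalent: (1) for every cofibration $A\hookrightarrow B$ in $\mathcal C$ and every $x:A\to X$, the map $\pi_{B/A}(f,x):\pi_{B/A}(X,x)\to\pi_{B/A}(X',f\circ x)$ is bijective; (2) for all such data this map is surjective; (3) $f$ is a weak equivalence in $\widetilde{\mathcal C}$.
   Context: A cylinder category is a category $\mathcal C$ with two classes of morphisms, the cofibrations and the weak equivalences (morphisms in both classes are called trivial cofibrations), such that: (1) both classes contain all isomorphisms and are closed under composition; (2) weak equivalences satisfy 2-out-of-6: if $f,g,h$ are composable and $f\circ g$, $g\circ h$ are weak equivalences then $f,g,h,f\circ g\circ h$ are; (3) $\mathcal C$ has an initial object $0$ and every $0\to X$ is a cofibration; (4) pushouts of cofibrations along arbitrary maps exist and are cofibrations; (5) pushouts of trivial cofibrations are trivial cofibrations; (6) for every object $X$ the codiagonal $X\sqcup X\to X$ factors as a cofibration $X\sqcup X\hookrightarrow IX$ followed by a weak equivalence $IX\to X$; (7) every trivial cofibration admits a retraction. For a cofibration $A\hookrightarrow B$, a relative cylinder object is a factorization $B\sqcup_A B\hookrightarrow I_AB\xrightarrow{\sim}B$ of the codiagonal into a cofibration followed by a weak equivalence. For a small cylinder category $\mathcal C$, $\widetilde{\mathcal C}$ is the category of presheaves of sets on $\mathcal C$ sending the initial object to a singleton and pushouts along cofibrations to pullbacks of sets; $\mathcal C$ is identified with its image under the Yoneda embedding. A morphism $f:X\to Y$ of $\widetilde{\mathcal C}$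 is a weak equivalence if for every cofibration $i:A\hookrightarrow B$ of $\mathcal C$ and every commutative square with top $u:A\to X$ and bottom $w:B\to Y$ (so $f\circ u=w\circ i$), there exist $a:B\to X$ with $a\circ i=u$ and $h:I_AB\to Y$ for some relative cylinder object such that $h$ restricted along the two inclusions $B\to I_AB$ is $f\circ a$ and $w$. For $X\in\widetilde{\mathcal C}$, a cofibration $i:A\hookrightarrow B$ in $\mathcal C$ and $x:A\to X$, $\pi_{B/A}(X,x)$ is the set of maps $g:B\to X$ with $g\circ i=x$ modulo the relation $g\sim_A g'$ iff $(g,g'):B\sqcup_AB\to X$ extends to $I_AB\to X$ for some relative cylinder object (an equivalence relation). A morphism $f:X\to X'$ induces $\pi_{B/A}(f,x):\pi_{B/A}(X,x)\to\pi_{B/A}(X',f\circ x)$, $g\mapsto f\circ g$. *)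

Set Implicit Arguments.
Unset Strict Implicit.

Record Category := {
  Ob :> Type;
  Hom : Ob -> Ob -> Type;
  idm : forall a, Hom a a;
  comp : forall a b c, Hom b c -> Hom a b -> Hom a c;
  comp_assoc : forall a b c d (h : Hom c d) (g : Hom b c) (f : Hom a b),
      comp h (comp g f) = comp (comp h g) f;
  comp_id_l : forall a b (f : Hom a b), comp (idm b) f = f;
  comp_id_r : forall a b (f : Hom a b), comp f (idm a) = f
}.

Arguments Hom {C} a b : rename.
Arguments idm {C} a : rename.
Arguments comp {C a b c} g f : rename.

Definition is_iso (C : Category) (a b : C) (f : Hom a b) : Prop :=
  exists g : Hom b a, comp g f = idm a /\ comp f g = idm b.

Definition is_initial (C : Category) (z : C) : Prop :=
  forall x : C, exists f : Hom z x, forall g : Hom z x, g = f.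

Definition is_pushout (C : Category) (A B D P : C)
  (i : Hom A B) (g : Hom A D) (g' : Hom B P) (i' : Hom D P) : Prop :=
  comp g' i = comp i' g /\
  forall (Z : C) (b : Hom B Z) (d : Hom D Z), comp b i = comp d g ->
    exists u : Hom P Z,
      (comp u g' = b /\ comp u i' = d) /\
      forall v : Hom P Z, comp v g' = b -> comp v i' = d -> v = u.

Record CylinderCategory := {
  cc_cat :> Category;
  cof : forall a b : cc_cat, Hom a b -> Prop;
  weq : forall a b : cc_cat, Hom a b -> Prop;
  cof_iso : forall a b (f : Hom a b), is_iso f -> cof f;
  weq_iso : forall a b (f : Hom a b), is_iso f -> weq f;
  cof_comp : forall a b c (g : Hom b c) (f : Hom a b),
      cof f -> cof g -> cof (comp g f);
  weq_comp : forall a b c (g : Hom b c) (f : Hom a b),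
      weq f -> weq g -> weq (comp g f);
  weq_2of6 : forall w x y z (h : Hom w x) (g : Hom x y) (f : Hom y z),
      weq (comp f g) -> weq (comp g h) ->
      weq f /\ weq g /\ weq h /\ weq (comp f (comp g h));
  init : cc_cat;
  init_initial : is_initial init;
  init_cof : forall x (f : Hom init x), cof f;
  pushout_exists : forall A B D (i : Hom A B) (g : Hom A D), cof i ->
      exists (P : cc_cat) (g' : Hom B P) (i' : Hom D P), is_pushout i g g' i';
  pushout_cof : forall A B D P (i : Hom A B) (g : Hom A D)
      (g' : Hom B P) (i' : Hom D P), cof i -> is_pushout i g g' i' -> cof i';
  pushout_triv_cof : forall A B D P (i : Hom A B) (g : Hom A D)
      (g' : Hom B P) (i' : Hom D P), cof i -> weq i ->
      is_pushout i g g' i' -> weq i';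
  (* (6) cylinder objects: for any coproduct X + X (pushout over 0) *)
  cylinder_exists : forall (X S : cc_cat) (z : Hom init X)
      (in1 in2 : Hom X S), is_pushout z z in1 in2 ->
      exists (I : cc_cat) (j : Hom S I) (p : Hom I X),
        cof j /\ weq p /\ comp p (comp j in1) = idm X /\
        comp p (comp j in2) = idm X;
  triv_cof_retract : forall a b (i : Hom a b), cof i -> weq i ->
      exists r : Hom b a, comp r i = idm a
}.

Arguments cof {C a b} f : rename.
Arguments weq {C a b} f : rename.

Definition rel_cylinder (C : CylinderCategory) (A B : C) (i : Hom A B)
  (P : C) (in1 in2 : Hom B P) (I : C) (j : Hom P I) (p : Hom I B) : Prop :=
  is_pushout i i in1 in2 /\ cof j /\ weq p /\
  comp p (comp j in1) = idm B /\ comp p (comp j in2) = idm B.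

Record Presheaf (C : CylinderCategory) := {
  ps_ob :> C -> Type;
  ps_map : forall a b : C, Hom a b -> ps_ob b -> ps_ob a;
  ps_id : forall a (x : ps_ob a), ps_map (idm a) x = x;
  ps_comp : forall a b c (g : Hom b c) (f : Hom a b) (x : ps_ob c),
      ps_map (comp g f) x = ps_map f (ps_map g x)
}.
Arguments ps_map {C} F {a b} f x : rename.

(* Objects of C~ : presheaves sending 0 to a singleton and pushouts along
   cofibrations to pullbacks of sets. *)
Definition in_Ctilde (C : CylinderCategory) (F : Presheaf C) : Prop :=
  (exists x0 : F (init C), forall y : F (init C), y = x0) /\
  (forall A B D P (i : Hom A B) (g : Hom A D) (g' : Hom B P) (i' : Hom D P),
     cof i -> is_pushout i g g' i' ->
     forall (b : F B) (d : F D), ps_map F i b = ps_map F g d ->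
       exists p : F P, (ps_map F g' p = b /\ ps_map F i' p = d) /\
         forall q : F P, ps_map F g' q = b -> ps_map F i' q = d -> q = p).

Unset Implicit Arguments.
Record PshMor (C : CylinderCategory) (F G : Presheaf C) := {
  nt :> forall a : C, F a -> G a;
  nt_natural : forall a b (f : Hom a b) (x : F b),
      nt a (ps_map F f x) = ps_map G f (nt b x)
}.
Arguments PshMor {C} F G.
Arguments nt {C F G} _ a _.
Arguments nt_natural {C F G} _ {a b} f x.
Set Implicit Arguments.

(* Via the Yoneda embedding, a map  a -> X  in C~ with a in C is an element
   of X(a); precomposition with u : b -> a is ps_map X u; postcomposition
   with f : X -> Y is f a. *)

Definition rel_htpy (C : CylinderCategory) (X : Presheaf C) (A B : C)
  (i : Hom A B) (g g' : X B) : Prop :=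
  exists (P : C) (in1 in2 : Hom B P) (I : C) (j : Hom P I) (p : Hom I B),
    rel_cylinder i in1 in2 j p /\
    exists h : X I, ps_map X (comp j in1) h = g /\ ps_map X (comp j in2) h = g'.

Arguments rel_htpy {C} X {A B} i g g'.

Definition Ctilde_weq (C : CylinderCategory) (X Y : Presheaf C)
  (f : PshMor X Y) : Prop :=
  forall (A B : C) (i : Hom A B), cof i ->
  forall (u : X A) (w : Y B), f A u = ps_map Y i w ->
  exists a : X B, ps_map X i a = u /\
    exists (P : C) (in1 in2 : Hom B P) (I : C) (j : Hom P I) (p : Hom I B),
      rel_cylinder i in1 in2 j p /\
      exists h : Y I, ps_map Y (comp j in1) h = f B a /\
                      ps_map Y (comp j in2) h = w.

(* pi_{B/A}(f,x) : pi_{B/A}(X,x) -> pi_{B/A}(X',f o x), [g] |-> [f o g],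
   with the quotient sets unfolded. *)
Definition pi_surj (C : CylinderCategory) (X X' : Presheaf C)
  (f : PshMor X X') (A B : C) (i : Hom A B) (x : X A) : Prop :=
  forall g' : X' B, ps_map X' i g' = f A x ->
    exists g : X B, ps_map X i g = x /\ rel_htpy X' i (f B g) g'.

Definition pi_inj (C : CylinderCategory) (X X' : Presheaf C)
  (f : PshMor X X') (A B : C) (i : Hom A B) (x : X A) : Prop :=
  forall g1 g2 : X B, ps_map X i g1 = x -> ps_map X i g2 = x ->
    rel_htpy X' i (f B g1) (f B g2) -> rel_htpy X i g1 g2.

Definition pi_bij (C : CylinderCategory) (X X' : Presheaf C)
  (f : PshMor X X') (A B : C) (i : Hom A B) (x : X A) : Prop :=
  pi_inj f i x /\ pi_surj f i x.

Set Implicit Arguments.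
Unset Strict Implicit.

(* Surjectivity of all the maps pi_{B/A}(f,x) is, once unfolded, literally the
   definition of a weak equivalence of C~.  For injectivity, let g1, g2 restrict
   to x on A and let f g1, f g2 be homotopic through h on a cylinder
   B +_A B -> I.  Since X and X' turn the pushout B +_A B into a pullback,
   g1, g2 glue to q in X(B +_A B), and h restricts to f q there.  Surjectivity
   for the cofibration B +_A B -> I then lifts h to some k in X(I) restricting
   to q, and k is a homotopy from g1 to g2. *)

Section RelativeHomotopy.

Variable C : CylinderCategory.

Lemma in_Ctilde_glue (F : Presheaf C) (HF : in_Ctilde F) (A B P : C)
    (i : Hom A B) (in1 in2 : Hom B P) (g1 g2 : F B) :
  cof i -> is_pushout i i in1 in2 -> ps_map F i g1 = ps_map F i g2 ->
  exists q : F P, ps_map F in1 q = g1 /\ ps_map F in2 q = g2.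
Proof.
  intros Hi Hpo E.
  destruct (proj2 HF _ _ _ _ i i in1 in2 Hi Hpo g1 g2 E) as [q [Hq _]].
  now exists q.
Qed.

Lemma in_Ctilde_glue_unique (F : Presheaf C) (HF : in_Ctilde F) (A B P : C)
    (i : Hom A B) (in1 in2 : Hom B P) (q q' : F P) :
  cof i -> is_pushout i i in1 in2 ->
  ps_map F in1 q = ps_map F in1 q' -> ps_map F in2 q = ps_map F in2 q' ->
  q = q'.
Proof.
  intros Hi Hpo E1 E2.
  assert (E : ps_map F i (ps_map F in1 q') = ps_map F i (ps_map F in2 q')).
  { rewrite <- !ps_comp. f_equal. exact (proj1 Hpo). }
  destruct (proj2 HF _ _ _ _ i i in1 in2 Hi Hpo _ _ E) as [p [_ Hp]].
  rewrite (Hp q), (Hp q'); auto.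
Qed.

Variables (X X' : Presheaf C) (f : PshMor X X').

Lemma pi_surj_iff_Ctilde_weq :
  (forall (A B : C) (i : Hom A B), cof i -> forall x : X A, pi_surj f i x) <->
  Ctilde_weq f.
Proof.
  split.
  - intros H A B i Hi u w E. exact (H A B i Hi u w (eq_sym E)).
  - intros H A B i Hi x g' E. exact (H A B i Hi x g' (eq_sym E)).
Qed.

Lemma pi_inj_of_pi_surj (HX : in_Ctilde X) (HX' : in_Ctilde X')
    (surj : forall (A B : C) (i : Hom A B), cof i -> forall x : X A,
              pi_surj f i x)
    (A B : C) (i : Hom A B) (x : X A) :
  cof i -> pi_inj f i x.
Proof.
  intros Hi g1 g2 E1 E2 [P [in1 [in2 [I [j [p [Hcyl [h [Eh1 Eh2]]]]]]]]].
  pose proof Hcyl as [Hpo [Hj _]].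
  destruct (in_Ctilde_glue HX Hi Hpo (eq_trans E1 (eq_sym E2)))
    as [q [Eq1 Eq2]].
  assert (Ejh : ps_map X' j h = f P q).
  { apply (in_Ctilde_glue_unique HX' Hi Hpo);
      rewrite <- ps_comp, <- nt_natural; congruence. }
  destruct (surj P I j Hj q h Ejh) as [k [Ek _]].
  exists P, in1, in2, I, j, p. split; [exact Hcyl|].
  exists k. rewrite !ps_comp, Ek. auto.
Qed.

End RelativeHomotopy.

Theorem mainTheorem6 (C : CylinderCategory) (X X' : Presheaf C)
  (HX : in_Ctilde X) (HX' : in_Ctilde X') (f : PshMor X X') :
  ((forall (A B : C) (i : Hom A B), cof i -> forall x : X A, pi_bij f i x) <->
   (forall (A B : C) (i : Hom A B), cof i -> forall x : X A, pi_surj f i x)) /\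
  ((forall (A B : C) (i : Hom A B), cof i -> forall x : X A, pi_surj f i x) <->
   Ctilde_weq f).
Proof.
  split.
  - split.
    + intros bij A B i Hi x. exact (proj2 (bij A B i Hi x)).
    + intros surj A B i Hi x.
      exact (conj (pi_inj_of_pi_surj HX HX' surj Hi) (surj A B i Hi x)).
  - exact (pi_surj_iff_Ctilde_weq f).
Qed.
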